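(* Let $m/n\in(0,1/2)$ with $\mathrm{LFP}(m/n)=u/v$ and $\mathrm{RFP}(m/n)=p/q$. Then: (a) $\#\mathcal O_{m/n}[m,n-1]=q=n-v$ and $\#\mathcal O_{m/n}[m-1,0]=n-q=v$; (b) $\#(\mathcal O_{m/n}[m,n-1]\cap[1,m])=\#(\mathcal O_{m/n}[m,n-1]\cap[n-m,n-1])=p=m-u$; (c) $\#(\mathcal O_{m/n}[m-1,0]\cap[1,m])=\#(\mathcal O_{m/n}[m-1,0]\cap[n-m,n-1])=m-p=u$.
   Context: All rationals are written in lowest terms. The Farey sequence $\mathcal F_n$ of order $n$ is the increasing sequence of rationals in $[0,1/2]$ with denominator at most $n$. For $h/k\in(0,1/2)$, the left and right Farey parents $\mathrm{LFP}(h/k)$, $\mathrm{RFP}(h/k)$ are the elements of $\mathcal F_k$ immediately preceding and following $h/k$. Let $+_n$ denote addition modulo $n$ on $\mathbb Z_n=\{0,\dots,n-1\}$. For $r,s\in\mathbb Z_n$, $\mathcal O_{m/n}[r,s]=\{r+_njm\colon 0\le j\le k\}$ where $k\ge0$ is least with $r+_nkm=s$. For integers $r\le s$, $[r,s]=\{r,r+1,\dots,s\}$. *)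

From mathcomp Require Import all_boot.

(* Fractions h/k are represented by pairs of naturals; "h/k < a/b" is h*b < a*k. *)

(* u/v is the left Farey parent of m/n: the element of F_n (rationals in
   [0,1/2] in lowest terms with denominator <= n) immediately preceding m/n. *)
Definition is_LFP (m n u v : nat) : Prop :=
  [/\ coprime u v, 0 < v <= n, 2 * u <= v, u * n < m * v &
      forall h k : nat, 0 < k <= n -> 2 * h <= k ->
        ~ (u * k < h * v /\ h * n < m * k)].

Definition is_RFP (m n p q : nat) : Prop :=
  [/\ coprime p q, 0 < q <= n, 2 * p <= q, m * q < p * n &
      forall h k : nat, 0 < k <= n -> 2 * h <= k ->
        ~ (m * k < h * n /\ h * q < p * k)].

(* O_{m/n}[r,s] = { r +_n j*m : 0 <= j <= k }, k least with r +_n k*m = s.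
   Since r +_n j m (j-fold) equals (r + j*m) %% n, an element x lies in the
   orbit iff x = (r + j*m) %% n for some j such that no i < j already hits s
   (i.e. j <= k).  When coprime m n, k <= n-1, so j ranges over 'I_n. *)
Definition forbit (n m r s : nat) : {set 'I_n} :=
  [set x : 'I_n | [exists j : 'I_n,
     (nat_of_ord x == (r + j * m) %% n) &&
     [forall i : 'I_n, (i < j) ==> ((r + i * m) %% n != s)]]].

Definition forbit_in (n m r s a b : nat) : {set 'I_n} :=
  [set x in forbit n m r s | a <= x <= b].

From mathcomp Require Import all_boot zify.
Set Implicit Arguments. Unset Strict Implicit.

(* The right Farey parent p/q of m/n is the solution of p n = m q + 1 with
   0 < q < n, and the left parent is (m - p)/(n - q).  Since q m = -1 and
   (n - q) m = 1 modulo n, the orbit O[m, n-1] is the residues of m, 2m, ..., qm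
   and O[m-1, 0] those of m-1, 2m-1, ..., (n-q)m - 1.  A residue of such a
   progression lies in [n-m, n-1] iff the next step wraps past a multiple of n,
   and (up to the endpoints 0 and m) in [1, m] iff the previous step wrapped, so
   all four window counts are quotients of the last term by n: p, resp. m - p. *)

Lemma coprime_det a b c d : a * b = c * d + 1 -> coprime a d.
Proof.
move=> det; rewrite /coprime -dvdn1.
have dvd_ab : gcdn a d %| a * b by rewrite dvdn_mulr ?dvdn_gcdl.
by rewrite det dvdn_addr ?dvdn_mull ?dvdn_gcdr in dvd_ab.
Qed.

Lemma eq_frac_coprime a b c d : coprime a b -> coprime c d -> 0 < b -> 0 < d ->
  a * d = c * b -> a = c /\ b = d.
Proof.
move=> cab ccd b_gt0 d_gt0 eq_ad.
have b_dvd_d : b %| d by rewrite -(@Gauss_dvdr b a) 1?coprime_sym // eq_ad dvdn_mull.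
have d_dvd_b : d %| b by rewrite -(@Gauss_dvdr d c) 1?coprime_sym // -eq_ad dvdn_mull.
have eq_bd : b = d by apply/eqP; rewrite eqn_dvd b_dvd_d d_dvd_b.
by subst d; split => //; apply/eqP; rewrite -(eqn_pmul2r b_gt0) eq_ad.
Qed.

(* If c/d - a/b = 1/(bd), every fraction h/k strictly between them has k >= b + d:
   k = b (c k) - d (a k) >= b (h d + 1) - d (h b - 1). *)
Lemma farey_between_denom a b c d h k : c * b = a * d + 1 ->
  a * k < h * b -> h * d < c * k -> b + d <= k.
Proof.
move=> det lt_ak lt_hd.
have k_eq : k * (c * b) = k * (a * d) + k by rewrite det mulnDr muln1.
nia.
Qed.

Lemma is_RFP_eq m n p q p0 q0 : 0 < m -> 2 * m < n ->
  p0 * n = m * q0 + 1 -> 0 < q0 <= n -> is_RFP m n p q -> p = p0 /\ q = q0.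
Proof.
move=> m_gt0 lt2mn det /andP[q0_gt0 q0_le] [cpq /andP[q_gt0 q_le] _ lt_mq no_between].
have le_p0q0 : 2 * p0 <= q0.
  (* otherwise 1/2 would lie strictly between m/n and p0/q0 *)
  rewrite leqNgt; apply/negP => lt_q0p0.
  have := @farey_between_denom m n p0 q0 1 2 det; lia.
have le_pq0 : p * q0 <= p0 * q.
  rewrite leqNgt; apply/negP => lt_p0q.
  by apply: (no_between p0 q0) => //; [rewrite q0_gt0 | split => //; lia].
have le_p0q : p0 * q <= p * q0.
  rewrite leqNgt; apply/negP => lt_pq0.
  have := @farey_between_denom m n p0 q0 p q det lt_mq lt_pq0; lia.
apply: eq_frac_coprime => //; last by lia.
by apply: (@coprime_det p0 n m); rewrite det.
Qed.

Lemma is_LFP_eq m n u v u0 v0 : 2 * m < n ->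
  m * v0 = u0 * n + 1 -> 0 < v0 <= n -> is_LFP m n u v -> u = u0 /\ v = v0.
Proof.
move=> lt2mn det /andP[v0_gt0 v0_le] [cuv /andP[v_gt0 v_le] _ lt_um no_between].
have le_u0v0 : 2 * u0 <= v0 by nia.
have le_u0v : u0 * v <= u * v0.
  rewrite leqNgt; apply/negP => lt_uv0.
  by apply: (no_between u0 v0) => //; [rewrite v0_gt0 | split => //; lia].
have le_uv0 : u * v0 <= u0 * v.
  rewrite leqNgt; apply/negP => lt_u0v.
  have := @farey_between_denom u0 v0 m n u v det lt_u0v lt_um; lia.
apply: eq_frac_coprime => //; last by lia.
by rewrite coprime_sym; apply: (@coprime_det v0 m n u0); rewrite mulnC det mulnC.
Qed.

Lemma farey_right_neighbor m n : 1 < n -> coprime m n ->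
  exists p q, p * n = m * q + 1 /\ 0 < q < n.
Proof.
move=> n_gt1 cmn.
have [q lt_qn] := @Bezoutl n m (ltnW n_gt1).
rewrite gcdnC (eqP cmn) => /dvdnP[p det].
exists p, q; split; first by rewrite -det addnC mulnC.
rewrite lt_qn andbT lt0n; apply/eqP => q0.
move: det; rewrite q0 mul0n addn0 => /esym/eqP; rewrite muln_eq1; lia.
Qed.

Lemma eqn_modMr_coprime n m a b : coprime m n ->
  (a * m == b * m %[mod n]) = (a == b %[mod n]).
Proof.
move=> cmn; wlog le_ba : a b / b <= a.
  move=> H; case: (leqP b a) => [|/ltnW]; first exact: H.
  by move=> /H; rewrite eq_sym => ->; rewrite eq_sym.
rewrite eqn_mod_dvd ?leq_mul2r ?le_ba ?orbT // eqn_mod_dvd //.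
by rewrite -mulnBl Gauss_dvdl // coprime_sym.
Qed.

Lemma sum_ord_eq k K : \sum_(j < K) (nat_of_ord j == k) = (k < K).
Proof.
case: (ltnP k K) => [lt_kK | le_Kk].
  rewrite (bigD1 (Ordinal lt_kK)) //= eqxx big1 // => j /eqP ne_jk.
  by case: eqP => // eq_jk; case: ne_jk; apply: val_inj.
by rewrite big1 // => j _; apply/eqP; have := ltn_ord j; lia.
Qed.

Lemma sum_window_indicator m K (x : nat -> nat) : 0 < m ->
  \sum_(j < K) (1 <= x j <= m) + \sum_(j < K) (x j == 0) =
  \sum_(j < K) (x j < m) + \sum_(j < K) (x j == m).
Proof.
move=> m_gt0; rewrite -!big_split; apply: eq_bigr => j _.
case: (x j) => [|y]; first by case: m m_gt0.
by case: (ltngtP y.+1 m).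
Qed.

Lemma modn_le_pred x n : 0 < n -> x %% n <= n.-1.
Proof. by move=> n_gt0; rewrite -ltnS prednK // ltn_pmod. Qed.

Section Orbit.

Variables n m r : nat.
Hypothesis coprime_mn : coprime m n.

Lemma orbit_eq i j : i < n -> j < n ->
  ((r + i * m) %% n == (r + j * m) %% n) = (i == j).
Proof. by move=> lt_in lt_jn; rewrite eqn_modDl eqn_modMr_coprime // !modn_small. Qed.

Lemma sum_orbit_eq K k s : K <= n -> k < n -> (r + k * m) %% n = s ->
  \sum_(j < K) ((r + j * m) %% n == s) = (k < K).
Proof.
move=> le_Kn lt_kn <-; rewrite -sum_ord_eq; apply: eq_bigr => j _.
by rewrite orbit_eq // (leq_trans (ltn_ord j)).
Qed.

Lemma card_forbit_in k s lo hi : k < n -> (r + k * m) %% n = s ->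
  #|forbit_in n m r s lo hi| = \sum_(j < k.+1) (lo <= (r + j * m) %% n <= hi).
Proof.
move=> lt_kn end_s; have n_gt0 : 0 < n by lia.
pose f (j : 'I_n) : 'I_n := Ordinal (ltn_pmod (r + j * m) n_gt0).
have f_inj : injective f.
  by move=> i j /(congr1 val)/eqP; rewrite /= orbit_eq // => /eqP/val_inj.
have before_end (j : 'I_n) :
    [forall i : 'I_n, (i < j) ==> ((r + i * m) %% n != s)] = (j <= k).
  apply/forallP/idP => [no_hit | le_jk i].
    rewrite leqNgt; apply/negP => lt_kj.
    by have := no_hit (Ordinal lt_kn); rewrite /= lt_kj end_s eqxx.
  apply/implyP => lt_ij; rewrite -end_s orbit_eq //; lia.
have -> : forbit_in n m r s lo hi = f @: [set j : 'I_n | (j <= k) && (lo <= f j <= hi)].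
  apply/setP => x; rewrite !inE; apply/andP/imsetP.
    case=> /existsP[j /andP[/eqP x_eq]]; rewrite before_end => le_jk x_in.
    by exists j; [rewrite inE le_jk /= -x_eq | apply: val_inj].
  case=> j; rewrite inE => /andP[le_jk j_in] ->; split => //.
  by apply/existsP; exists j; rewrite eqxx before_end.
rewrite card_imset // -sum1_card big_mkcond /=.
rewrite (big_ord_widen n (fun j : nat => (lo <= (r + j * m) %% n <= hi) : nat) lt_kn).
rewrite [RHS]big_mkcond; apply: eq_bigr => j _; rewrite inE ltnS.
by case: (j <= k); case: (_ <= _ <= _).
Qed.

Lemma card_forbit k s : k < n -> (r + k * m) %% n = s -> #|forbit n m r s| = k.+1.
Proof.
move=> lt_kn end_s.
have -> : forbit n m r s = forbit_in n m r s 0 n.-1.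
  apply/setP => x; rewrite [in RHS]inE; have := ltn_ord x.
  by case: (_ \in forbit _ _ _ _) => //= lt_xn; apply/esym; lia.
rewrite (card_forbit_in _ _ lt_kn end_s) -[RHS]card_ord -sum1_card.
by apply: eq_bigr => j _; rewrite leq0n modn_le_pred //; lia.
Qed.

End Orbit.

Section Wraps.

Variables n m : nat.
Hypothesis lt_mn : m < n.

Lemma ltn_modD_wrap x : ((x + m) %% n < m) = (n - m <= x %% n).
Proof.
have n_gt0 : 0 < n by lia.
rewrite modnD // (modn_small lt_mn); have := ltn_pmod x n_gt0.
by case: leqP => /=; lia.
Qed.

Lemma divnD_wrap x : (x + m) %/ n = x %/ n + (n - m <= x %% n).
Proof.
have n_gt0 : 0 < n by lia.
by rewrite divnD // (divn_small lt_mn) addn0 (modn_small lt_mn) leq_subLR [m + _]addnC.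
Qed.

(* x + j m wraps past a multiple of n at the next step iff its residue is >= n - m. *)
Lemma divn_add_muln x K :
  (x + K * m) %/ n = x %/ n + \sum_(j < K) (n - m <= (x + j * m) %% n).
Proof.
elim: K => [|K IH]; first by rewrite big_ord0 mul0n !addn0.
by rewrite big_ord_recr /= mulSnr addnA divnD_wrap IH addnA.
Qed.

Lemma divn_add_muln_lt x K :
  (x + K * m) %/ n = x %/ n + \sum_(j < K) ((x + j.+1 * m) %% n < m).
Proof.
rewrite divn_add_muln; congr (_ + _); apply: eq_bigr => j _.
by rewrite mulSnr addnA ltn_modD_wrap.
Qed.

End Wraps.

Section FareyOrbits.

Variables m n p q : nat.
Hypotheses (m_gt0 : 0 < m) (lt_mn : m < n) (q_gt0 : 0 < q) (lt_qn : q < n).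
Hypothesis det_pq : p * n = m * q + 1.

Let coprime_mn : coprime m n.
Proof. by rewrite coprime_sym; apply: (@coprime_det n p q m); rewrite mulnC det_pq mulnC. Qed.

Lemma farey_num_le : p <= m.
Proof.
have le_mqn : m * q.+1 <= m * n by rewrite leq_mul2l lt_qn orbT.
by rewrite -(leq_pmul2r (ltn_trans q_gt0 lt_qn)) det_pq; rewrite mulnS in le_mqn; lia.
Qed.

Lemma farey_left_det : m * (n - q) = (m - p) * n + 1.
Proof.
have le_mqn : m * q + 1 <= m * n by rewrite -det_pq leq_mul2r farey_num_le orbT.
by rewrite mulnBr mulnBl det_pq; lia.
Qed.

Let n_gt0 : 0 < n := ltn_trans m_gt0 lt_mn.

Let p_gt0 : 0 < p.
Proof. by move: det_pq; case: (p) => //; rewrite addn1. Qed.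

Let right_end : m + q.-1 * m = p.-1 * n + n.-1.
Proof.
rewrite -mulSn prednK // mulnC; have := det_pq; rewrite -(prednK p_gt0) mulSn.
lia.
Qed.

Let left_end : m.-1 + (n - q).-1 * m = (m - p) * n.
Proof.
have := farey_left_det; rewrite -(prednK (_ : 0 < n - q)) ?subn_gt0 // mulnS.
lia.
Qed.

Let card_right_orbit_in lo hi :
  #|forbit_in n m m n.-1 lo hi| = \sum_(j < q) (lo <= (m + j * m) %% n <= hi).
Proof.
have := card_forbit_in (r:=m) (k:=q.-1) (s:=n.-1) coprime_mn lo hi.
rewrite prednK //; apply; first lia.
by rewrite right_end modnMDl modn_small //; lia.
Qed.

Let card_left_orbit_in lo hi :
  #|forbit_in n m m.-1 0 lo hi| = \sum_(j < n - q) (lo <= (m.-1 + j * m) %% n <= hi).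
Proof.
have := card_forbit_in (r:=m.-1) (k:=(n - q).-1) (s:=0) coprime_mn lo hi.
rewrite prednK ?subn_gt0 //; apply; first lia.
by rewrite left_end modnMl.
Qed.

Lemma card_right_orbit : #|forbit n m m n.-1| = q.
Proof.
rewrite (card_forbit (k:=q.-1) coprime_mn) ?prednK //; first lia.
by rewrite right_end modnMDl modn_small //; lia.
Qed.

Lemma card_left_orbit : #|forbit n m m.-1 0| = n - q.
Proof.
rewrite (card_forbit (k:=(n - q).-1) coprime_mn) ?prednK //; try lia.
by rewrite left_end modnMl.
Qed.

Lemma card_right_orbit_high : #|forbit_in n m m n.-1 (n - m) n.-1| = p.
Proof.
have quot : (m + q * m) %/ n = p.
  by rewrite (_ : m + q * m = p * n + m.-1) ?divnMDl ?divn_small ?addn0; lia.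
rewrite card_right_orbit_in -quot divn_add_muln // (divn_small lt_mn) add0n.
by apply: eq_bigr => j _; rewrite modn_le_pred ?andbT //; lia.
Qed.

Lemma card_left_orbit_high : #|forbit_in n m m.-1 0 (n - m) n.-1| = m - p.
Proof.
have det_uv := farey_left_det.
have quot : (m.-1 + (n - q) * m) %/ n = m - p.
  by rewrite (_ : m.-1 + (n - q) * m = (m - p) * n + m) ?divnMDl ?divn_small ?addn0; lia.
rewrite card_left_orbit_in -quot divn_add_muln // (divn_small (_ : m.-1 < n)) ?add0n; last lia.
by apply: eq_bigr => j _; rewrite modn_le_pred ?andbT //; lia.
Qed.

Lemma card_right_orbit_low : #|forbit_in n m m n.-1 1 m| = p.
Proof.
have never_0 : \sum_(j < q) ((m + j * m) %% n == 0) = 0.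
  rewrite (sum_orbit_eq (k:=n.-1) coprime_mn) ?ltnNge //; try lia.
  by rewrite -mulSn prednK ?modnMr //; lia.
have once_m : \sum_(j < q) ((m + j * m) %% n == m) = 1.
  by rewrite (sum_orbit_eq (k:=0) coprime_mn) ?q_gt0 ?addn0 ?modn_small //; lia.
have wraps : \sum_(j < q) ((m + j * m) %% n < m) = p.-1.
  have qm : q * m = p.-1 * n + n.-1 by rewrite -right_end -mulSn prednK.
  have := divn_add_muln_lt lt_mn 0 q.
  rewrite add0n div0n add0n qm divnMDl // (divn_small (_ : n.-1 < n)) ?addn0 => [->|]; last lia.
  by apply: eq_bigr => j _; rewrite add0n mulSn.
have := sum_window_indicator q (fun j => (m + j * m) %% n) m_gt0.
by rewrite never_0 once_m wraps addn0 addn1 prednK // card_right_orbit_in => ->.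
Qed.

Lemma card_left_orbit_low : #|forbit_in n m m.-1 0 1 m| = m - p.
Proof.
have det_uv := farey_left_det.
have once_0 : \sum_(j < n - q) ((m.-1 + j * m) %% n == 0) = 1.
  by rewrite (sum_orbit_eq (k:=(n - q).-1) coprime_mn) ?left_end ?modnMl //; lia.
have never_m : \sum_(j < n - q) ((m.-1 + j * m) %% n == m) = 0.
  rewrite (sum_orbit_eq (k:=n - q) coprime_mn) ?ltnn //; try lia.
  by rewrite (_ : m.-1 + (n - q) * m = (m - p) * n + m) ?modnMDl ?modn_small; lia.
have wraps : \sum_(j < n - q) ((m.-1 + j * m) %% n < m) = (m - p).+1.
  have [v v_eq] : exists v, n - q = v.+1 by exists (n - q).-1; lia.
  have := divn_add_muln_lt lt_mn m.-1 v.
  have -> : m.-1 + v * m = (m - p) * n by rewrite -left_end v_eq.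
  rewrite mulnK // (divn_small (_ : m.-1 < n)) ?add0n => [->|]; last lia.
  rewrite v_eq big_ord_recl /= mul0n addn0 modn_small; last lia.
  by rewrite (_ : m.-1 < m) //; lia.
have := sum_window_indicator (n - q) (fun j => (m.-1 + j * m) %% n) m_gt0.
by rewrite once_0 never_m wraps addn0 addn1 card_left_orbit_in => /eqP; rewrite eqSS => /eqP.
Qed.

End FareyOrbits.

Theorem lemma1p11 (m n u v p q : nat) :
  0 < m -> 2 * m < n -> coprime m n ->
  is_LFP m n u v -> is_RFP m n p q ->
  [/\ (#|forbit n m m (n.-1)| = q /\ q = n - v),
      (#|forbit n m (m.-1) 0| = n - q /\ n - q = v),
      [/\ #|forbit_in n m m (n.-1) 1 m| = p,
          #|forbit_in n m m (n.-1) (n - m) (n.-1)| = p & p = m - u] &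
      [/\ #|forbit_in n m (m.-1) 0 1 m| = m - p,
          #|forbit_in n m (m.-1) 0 (n - m) (n.-1)| = m - p & m - p = u]].
Proof.
move=> m_gt0 lt2mn coprime_mn is_lfp is_rfp.
have lt_mn : m < n by lia.
have n_gt1 : 1 < n by lia.
have [p0 [q0 [det /andP[q0_gt0 lt_q0n]]]] := farey_right_neighbor n_gt1 coprime_mn.
have q0_bound : 0 < q0 <= n by rewrite q0_gt0 ltnW.
have v0_bound : 0 < n - q0 <= n by rewrite subn_gt0 lt_q0n leq_subr.
have det_left := farey_left_det m_gt0 lt_mn q0_gt0 lt_q0n det.
have le_p0m := farey_num_le m_gt0 lt_mn q0_gt0 lt_q0n det.
have [-> ->] := is_RFP_eq m_gt0 lt2mn det q0_bound is_rfp.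
have [-> ->] := is_LFP_eq lt2mn det_left v0_bound is_lfp.
have card_R := card_right_orbit m_gt0 lt_mn q0_gt0 lt_q0n det.
have card_L := card_left_orbit m_gt0 lt_mn q0_gt0 lt_q0n det.
have card_R_low := card_right_orbit_low m_gt0 lt_mn q0_gt0 lt_q0n det.
have card_R_high := card_right_orbit_high m_gt0 lt_mn q0_gt0 lt_q0n det.
have card_L_low := card_left_orbit_low m_gt0 lt_mn q0_gt0 lt_q0n det.
have card_L_high := card_left_orbit_high m_gt0 lt_mn q0_gt0 lt_q0n det.
rewrite (subKn (ltnW lt_q0n)) (subKn le_p0m).
split; [split | split | split | split]; solve [reflexivity | assumption].
Qed.
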